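(* Given full second-order logic (full semantics): (1) for any model $\mathcal{M}$ of $\mathsf{BLT}$, the set $\{s\in M:\mathcal{M}\models s\text{ is a boolean-level}\}$ is well-ordered by $\in^{\mathcal{M}}$; (2) for every ordinal $\alpha>0$ there is a model $\mathcal{M}$ of $\mathsf{BLT}$ whose boolean-levels, ordered by $\in^{\mathcal{M}}$, are isomorphic to $\alpha$; (3) given any two models of $\mathsf{BLT}$, one is isomorphic to an initial segment of the other.
   Context: $\overline{a}=\{x:x\notin a\}$. $\mathrm{bpot}(a)=\{x:\exists c(c\in a\wedge c\notin c\wedge(x\subseteq c\vee\overline{x}\subseteq c))\}$. A boolean-history is $h$ with $h\notin h$ and $x=\mathrm{bpot}(x\cap h)$ for $x\in h$; a boolean-level is $\mathrm{bpot}(h)$ for a boolean-history $h$. $\mathsf{BLT}$ is the second-order theory (only primitive $\in$) with axioms Extensionality; Complements: $\forall a\exists c(c=\overline{a}\wedge(a\notin a\leftrightarrow c\in c))$; Separation$_\notin$: $\forall F\forall a(a\notin a\to\exists b(b\notin b\wedge\forall x(x\in b\leftrightarrow(F(x)\wedge x\in a))))$; Stratification$_\notin$: every $a\notin a$ is a subset of some boolean-level. In $\mathsf{BLT}$, for $a\notin a$ let $\mathrm{B}(a)$ be the $\in$-least boolean-level having $a$ as a subset, and for $a\in a$ let $\mathrm{B}(a)=\mathrm{B}(\overline{a})$. For models $\mathcal{A},\mathcal{M}$ of $\mathsf{BLT}$, $\mathcal{A}$ is an initial segment of $\mathcal{M}$ iff either $\mathcal{A}=\mathcal{M}$ or there is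 $s$ with $\mathcal{M}\models s\text{ is a boolean-level}$ such that $\mathcal{A}$ is isomorphic to the substructure of $\mathcal{M}$ with domain $\{x\in M:\mathcal{M}\models\mathrm{B}(x)\in s\}$. *)

(* Models of BLT are structures (M, mem) with M : Type and
   mem : M -> M -> Prop.  Full second-order semantics: second-order
   variables range over ALL predicates M -> Prop. *)

Section BLT.
Variables (M : Type) (mem : M -> M -> Prop).

Definition subsetM (x c : M) : Prop := forall y, mem y x -> mem y c.

Definition csubsetM (x c : M) : Prop := forall y, ~ mem y x -> mem y c.

Definition in_bpot (a : M -> Prop) (x : M) : Prop :=
  exists c, a c /\ ~ mem c c /\ (subsetM x c \/ csubsetM x c).

Definition is_bhistory (h : M) : Prop :=
  ~ mem h h /\
  forall x, mem x h ->
    forall y, mem y x <-> in_bpot (fun c => mem c x /\ mem c h) y.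

Definition is_blevel (s : M) : Prop :=
  exists h, is_bhistory h /\ forall y, mem y s <-> in_bpot (fun c => mem c h) y.

Definition BLT : Prop :=
  (forall a b, (forall x, mem x a <-> mem x b) -> a = b) /\
  (forall a, exists c, (forall x, mem x c <-> ~ mem x a) /\ (~ mem a a <-> mem c c)) /\
  (forall (F : M -> Prop) a, ~ mem a a ->
     exists b, ~ mem b b /\ forall x, mem x b <-> (F x /\ mem x a)) /\
  (forall a, ~ mem a a -> exists s, is_blevel s /\ subsetM a s).

Definition least_level_over (x b : M) : Prop :=
  is_blevel b /\ subsetM x b /\
  forall b', is_blevel b' -> subsetM x b' -> b' = b \/ mem b b'.

Definition is_B (x b : M) : Prop :=
  (~ mem x x /\ least_level_over x b) \/
  (mem x x /\ exists c, (forall y, mem y c <-> ~ mem y x) /\ least_level_over c b).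

End BLT.

Definition well_ordered_on {T : Type} (P : T -> Prop) (R : T -> T -> Prop) : Prop :=
  (forall x y z, P x -> P y -> P z -> R x y -> R y z -> R x z) /\
  (forall x, P x -> ~ R x x) /\
  (forall x y, P x -> P y -> R x y \/ x = y \/ R y x) /\
  (forall Q : T -> Prop, (forall x, Q x -> P x) -> (exists x, Q x) ->
     exists m, Q m /\ forall y, Q y -> m = y \/ R m y).

Definition iso_to_sub {A M : Type} (memA : A -> A -> Prop)
  (memM : M -> M -> Prop) (D : M -> Prop) : Prop :=
  exists f : A -> M,
    (forall a, D (f a)) /\
    (forall a1 a2, f a1 = f a2 -> a1 = a2) /\
    (forall y, D y -> exists a, f a = y) /\
    (forall a1 a2, memA a1 a2 <-> memM (f a1) (f a2)).

Definition initial_segment {A M : Type} (memA : A -> A -> Prop)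
  (memM : M -> M -> Prop) : Prop :=
  iso_to_sub memA memM (fun _ => True) \/
  exists s, is_blevel M memM s /\
    iso_to_sub memA memM (fun x => exists b, is_B M memM x b /\ memM b s).

(* A class H of non-self-membered sets with x = bpot(x ∩ H) for every x in H
   (a boolean-history seen as a class) is well-founded under ∈: Separation
   turns a subclass without ∈-minimal element into a set lying in all its
   members.  By a double minimal-counterexample argument, of two such classes
   one is an initial ∈-segment of the other.  Levels are the sets bpot(H), so
   they are linearly and well ordered by ∈, each being bpot of the levels
   below it.

   Between two models, let E be the least relation relating x and y when both
   are non-self-membered with E-matching members, or both self-membered with
   E-related complements.  E is an ∈-preserving partial bijection sending
   levels to levels.  Since a level is determined by the levels below it, the
   least unmatched levels of the two models cannot both exist; if all levels of
   one model are matched, so is every element (each is a subset or a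
   co-subset of a level), and its image is either everything or everything
   whose B lies below the least unmatched level of the other model.

   For a well-order (A, <), well-founded trees carrying a sign, read as the set
   or the co-set of their children, give a model: the level indexed by a is
   the tree of all signed subfamilies of the children of earlier levels, and
   bounded trees up to extensional equality satisfy BLT with exactly these
   levels. *)

From Stdlib Require Import Classical ClassicalEpsilon.
From Stdlib Require Import FunctionalExtensionality PropExtensionality ProofIrrelevance.

Section Levels.
Context {M : Type} {mem : M -> M -> Prop} (HB : BLT M mem).

Notation level := (is_blevel M mem).
Notation sub := (subsetM M mem).
Notation csub := (csubsetM M mem).
Notation bpot := (in_bpot M mem).

Lemma blt_ext a b : (forall x, mem x a <-> mem x b) -> a = b.
Proof. exact (proj1 HB a b). Qed.

Lemma blt_compl a : exists c, (forall x, mem x c <-> ~ mem x a) /\ (~ mem a a <-> mem c c).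
Proof. exact (proj1 (proj2 HB) a). Qed.

Lemma blt_sep (F : M -> Prop) a : ~ mem a a ->
  exists b, ~ mem b b /\ forall x, mem x b <-> F x /\ mem x a.
Proof. exact (proj1 (proj2 (proj2 HB)) F a). Qed.

Lemma blt_strat a : ~ mem a a -> exists s, level s /\ sub a s.
Proof. exact (proj2 (proj2 (proj2 HB)) a). Qed.

Lemma in_bpot_mono (A B : M -> Prop) :
  (forall c, ~ mem c c -> A c -> B c) -> forall y, bpot A y -> bpot B y.
Proof. intros H y [c [Hc [Hcc Hs]]]; exists c; auto. Qed.

Lemma in_bpot_ext (A B : M -> Prop) :
  (forall c, ~ mem c c -> (A c <-> B c)) -> forall y, bpot A y <-> bpot B y.
Proof.
  intros H y; split; apply in_bpot_mono; intros c Hc; apply H; auto.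
Qed.

Lemma russell_set a : ~ mem a a -> exists r, ~ mem r r /\ ~ mem r a /\
  forall x, mem x r <-> ~ mem x x /\ mem x a.
Proof.
  intros Ha. destruct (blt_sep (fun x => ~ mem x x) a Ha) as [r [Hr Hrm]].
  exists r. split; [exact Hr|]. split; [|exact Hrm].
  intros Hra. apply Hr, Hrm. auto.
Qed.

Lemma not_universal a : ~ mem a a -> ~ forall y, mem y a.
Proof. intros Ha Hall. destruct (russell_set a Ha) as [r [_ [Hra _]]]. auto. Qed.

(** * History classes *)

(* A boolean-history given as a class [H] of the model rather than as an
   element [h] of it. *)
Definition hclass (H : M -> Prop) : Prop :=
  (forall x, H x -> ~ mem x x) /\
  (forall x, H x -> forall y, mem y x <-> bpot (fun c => mem c x /\ H c) y).

Lemma hclass_ext H K : (forall c, H c <-> K c) -> hclass H -> hclass K.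
Proof.
  intros E [Hn Hm]; split.
  - intros x Kx; apply Hn, E, Kx.
  - intros x Kx y; rewrite (Hm x (proj2 (E x) Kx) y).
    apply in_bpot_ext; intros c _; rewrite (E c); tauto.
Qed.

Section HistoryClass.
Variable H : M -> Prop.
Hypothesis HH : hclass H.

Lemma hclass_nself x : H x -> ~ mem x x.
Proof. exact (proj1 HH x). Qed.

Lemma hclass_mem x : H x -> forall y, mem y x <-> bpot (fun c => mem c x /\ H c) y.
Proof. exact (proj2 HH x). Qed.

(* A nonempty subclass [Q] without a minimal element would have
   [{y | forall b, Q b -> mem y b}] as a common member of all its elements. *)
Lemma hclass_wf (Q : M -> Prop) : (forall x, Q x -> H x) -> (exists x, Q x) ->
  exists m, Q m /\ forall y, Q y -> ~ mem y m.
Proof.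
  intros HQ [b0 Qb0]. apply NNPP; intro Hno.
  assert (Hdesc : forall m, Q m -> exists y, Q y /\ mem y m).
  { intros m Qm. apply NNPP; intro Hc. apply Hno. exists m. split; auto.
    intros y Qy Hy. apply Hc. eauto. }
  destruct (blt_sep (fun y => forall b, Q b -> mem y b) b0 (hclass_nself b0 (HQ b0 Qb0)))
    as [D [HD HDm]].
  assert (HDb : forall b, Q b -> mem D b).
  { intros b Qb. destruct (Hdesc b Qb) as [b' [Qb' Hb']].
    apply (hclass_mem b (HQ b Qb)). exists b'.
    split; [auto|]. split; [apply hclass_nself; auto|].
    left. intros y Hy. apply HDm in Hy. exact (proj1 Hy b' Qb'). }
  apply HD, HDm. auto.
Qed.

Lemma hclass_ind (P : M -> Prop) :
  (forall x, H x -> (forall y, H y -> mem y x -> P y) -> P x) -> forall x, H x -> P x.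
Proof.
  intros IH x Hx. apply NNPP; intro Px.
  destruct (hclass_wf (fun x => H x /\ ~ P x)) as [m [[Hm Pm] Hmin]]; [tauto | eauto |].
  apply Pm, IH; auto. intros y Hy Hym. apply NNPP; intro Py. apply (Hmin y); auto.
Qed.

Lemma hclass_asym a d : H a -> H d -> mem a d -> ~ mem d a.
Proof.
  intros Ha Hd Had Hda.
  destruct (hclass_wf (fun x => x = a \/ x = d)) as [m [[-> | ->] Hmin]];
    [intros x [-> | ->]; auto | eauto | apply (Hmin d) | apply (Hmin a)]; auto.
Qed.

Lemma hclass_mem_sub x y : H x -> H y -> mem y x -> exists c, (mem c x /\ H c) /\ sub y c.
Proof.
  intros Hx Hy Hyx. apply (hclass_mem x Hx) in Hyx.
  destruct Hyx as [c [[Hcx Hc] [Hcc [Hs | Hs]]]]; [eauto|].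
  exfalso. assert (Hcy : mem c y) by (apply NNPP; intro; apply Hcc, Hs; auto).
  apply (hclass_asym y c); auto. apply Hs, hclass_nself; auto.
Qed.

Lemma hclass_transitive e f : H e -> H f -> mem f e -> sub f e.
Proof.
  intros He. revert f. revert e He.
  apply (hclass_ind (fun e => forall f, H f -> mem f e -> sub f e)).
  intros e He IH f Hf Hfe y Hy.
  destruct (hclass_mem_sub e f He Hf Hfe) as [g [[Hge Hg] Hfg]].
  assert (Hyg : mem y g) by auto.
  apply (hclass_mem g Hg) in Hyg. destruct Hyg as [k [[Hkg Hk] [_ Hs]]].
  assert (Hkg' : sub k g) by auto.
  apply (hclass_mem e He). exists g. split; [auto|]. split; [apply hclass_nself; auto|].
  destruct Hs as [Hs | Hs]; [left | right]; intros z Hz; apply Hkg', Hs; auto.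
Qed.

Lemma hclass_mem_trans z c b : H c -> H b -> mem z c -> mem c b -> mem z b.
Proof. intros Hc Hb Hzc Hcb. exact (hclass_transitive b c Hb Hc Hcb z Hzc). Qed.

Lemma hclass_in_bpot x : H x -> bpot H x.
Proof.
  intros Hx. exists x. split; [auto|]. split; [apply hclass_nself; auto|]. left; intros y; auto.
Qed.

Lemma hclass_restrict x : H x -> hclass (fun c => mem c x /\ H c).
Proof.
  intros Hx. split.
  - intros y [_ Hy]; apply hclass_nself; auto.
  - intros y [Hyx Hy] z. rewrite (hclass_mem y Hy z). apply in_bpot_ext. intros c _. split.
    + intros [Hcy Hc]. split; auto. split; auto. apply (hclass_mem_trans c y x); auto.
    + intros [Hcy [_ Hc]]; auto.
Qed.

End HistoryClass.

Lemma hclass_eq H K x y : hclass H -> hclass K -> H x -> K y ->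
  (forall c, mem c x /\ H c <-> mem c y /\ K c) -> x = y.
Proof.
  intros HH HK Hx Ky E. apply blt_ext. intros z.
  rewrite (hclass_mem H HH x Hx z), (hclass_mem K HK y Ky z).
  apply in_bpot_ext. intros c _; apply E.
Qed.

(* A counterexample minimal first in [x], then in [y], would have the same
   members in [H] as [y] has in [K], hence equal [y] by [hclass_eq]. *)
Lemma hclass_trichotomy H K x y : hclass H -> hclass K -> H x -> K y ->
  x = y \/ (K x /\ mem x y) \/ (H y /\ mem y x).
Proof.
  intros HH HK Hx0 Ky0. apply NNPP; intro Hbad.
  set (S := fun x y => x = y \/ (K x /\ mem x y) \/ (H y /\ mem y x)).
  destruct (hclass_wf H HH (fun x => H x /\ exists y, K y /\ ~ S x y))
    as [x' [[Hx [y1 [Ky1 Sy1]]] Hxmin]]; [tauto | eauto |].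
  destruct (hclass_wf K HK (fun y => K y /\ ~ S x' y))
    as [y' [[Ky Sxy] Hymin]]; [tauto | eauto |].
  apply Sxy. left. apply (hclass_eq H K x' y' HH HK Hx Ky). intros c. split.
  - intros [Hcx Hc].
    assert (Scy : S c y') by (apply NNPP; intro Hn; apply (Hxmin c); eauto).
    destruct Scy as [-> | [[Kc Hcy] | [Hy Hyc]]]; auto;
      exfalso; apply Sxy; right; right; split; auto.
    apply (hclass_mem_trans H HH y' c x'); auto.
  - intros [Hcy Kc].
    assert (Sxc : S x' c) by (apply NNPP; intro Hn; apply (Hymin c); auto).
    destruct Sxc as [-> | [[Kx Hxc] | [Hc Hcx]]]; auto;
      exfalso; apply Sxy; right; left; split; auto.
    apply (hclass_mem_trans K HK x' c y'); auto.
Qed.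

Lemma hclass_least_outside H K : hclass H -> hclass K -> (exists x, H x /\ ~ K x) ->
  exists x, H x /\ forall c, K c <-> mem c x /\ H c.
Proof.
  intros HH HK Ex.
  destruct (hclass_wf H HH (fun x => H x /\ ~ K x)) as [x [[Hx Kx] Hmin]]; [tauto | auto |].
  exists x. split; auto. intros c. split.
  - intros Kc. destruct (hclass_trichotomy H K x c HH HK Hx Kc) as [-> | [[] | []]]; tauto.
  - intros [Hcx Hc]. apply NNPP; intro Kc. apply (Hmin c); auto.
Qed.

Lemma hclass_cmp H K : hclass H -> hclass K ->
  (forall c, H c <-> K c) \/
  (exists x, H x /\ forall c, K c <-> mem c x /\ H c) \/
  (exists y, K y /\ forall c, H c <-> mem c y /\ K c).
Proof.
  intros HH HK.
  destruct (classic (exists x, H x /\ ~ K x)) as [Ex | NEx];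
    [right; left; apply hclass_least_outside; auto|].
  destruct (classic (exists y, K y /\ ~ H y)) as [Ey | NEy];
    [right; right; apply hclass_least_outside; auto|].
  left. intros c. split; intro Hc; apply NNPP; intro Hn; eauto.
Qed.

(** * Boolean-levels *)

Definition level_of (H : M -> Prop) (s : M) : Prop :=
  hclass H /\ (exists h, ~ mem h h /\ forall c, mem c h <-> H c) /\
  forall y, mem y s <-> bpot H y.

Lemma level_level_of s : level s -> exists H, level_of H s.
Proof.
  intros [h [[Hh Hhist] Hs]].
  destruct (blt_sep (fun c => ~ mem c c) h Hh) as [R [HR HRm]].
  exists (fun c => mem c h /\ ~ mem c c). split; [|split].
  - split; [tauto|]. intros x [Hxh _] y. rewrite (Hhist x Hxh y).
    apply in_bpot_ext. intros c Hc; tauto.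
  - exists R. split; auto. intros c; rewrite HRm; tauto.
  - intros y. rewrite Hs. apply in_bpot_ext. intros c Hc; tauto.
Qed.

Lemma level_intro H s : hclass H -> ~ mem s s -> (forall y, mem y s <-> bpot H y) -> level s.
Proof.
  intros HH Hs Hsm.
  destruct (blt_sep H s Hs) as [h [Hh Hhm]].
  assert (Hhc : forall c, mem c h <-> H c).
  { intros c; rewrite Hhm. split; [tauto|]. intros Hc; split; auto.
    apply Hsm, hclass_in_bpot; auto. }
  exists h. split; [split; [exact Hh|]|].
  - intros x Hx y. apply Hhc in Hx. rewrite (hclass_mem H HH x Hx y).
    apply in_bpot_ext; intros c _. rewrite Hhc; tauto.
  - intros y. rewrite Hsm. apply in_bpot_ext; intros c _; rewrite Hhc; tauto.
Qed.

Lemma hclass_elem_level H x : hclass H -> H x -> level x.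
Proof.
  intros HH Hx. apply (level_intro (fun c => mem c x /\ H c)).
  - apply hclass_restrict; auto.
  - apply (hclass_nself H); auto.
  - apply hclass_mem; auto.
Qed.

Lemma hclass_sub_bpot H s : hclass H -> (forall y, mem y s <-> bpot H y) ->
  forall x, H x -> sub x s.
Proof.
  intros HH Hs x Hx y Hy. apply Hs. apply (hclass_mem H HH x Hx) in Hy.
  revert Hy. apply in_bpot_mono. intros c _ [_ Hc]; auto.
Qed.

(* With [h] the set of [H], the set [{y in c | ~ mem y y}] lies outside [c],
   hence in [h], and it can be neither equal to [c] nor on either side of it. *)
Lemma hclass_not_cobounded H h c : hclass H -> (forall d, mem d h <-> H d) ->
  H c -> ~ csub h c.
Proof.
  intros HH Hh Hc Hhc.
  assert (Hcc : ~ mem c c) by (apply (hclass_nself H); auto).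
  destruct (russell_set c Hcc) as [r [Hrr [Hrc Hrm]]].
  assert (Hr : H r) by (apply Hh; apply NNPP; intro Hn; apply Hrc, Hhc, Hn).
  destruct (hclass_trichotomy H H r c HH HH Hr Hc) as [-> | [[_ Hr'] | [_ Hcr]]].
  - destruct (blt_compl c) as [d [Hd Hdd]].
    assert (Hd' : mem d d) by (apply Hdd; auto).
    assert (Hdh : ~ mem d h) by (intro Hdh; apply (hclass_nself H HH d); [apply Hh|]; auto).
    apply Hhc, Hrm in Hdh. tauto.
  - contradiction.
  - apply Hrm in Hcr. tauto.
Qed.

Lemma level_of_nself H s : level_of H s -> ~ mem s s.
Proof.
  intros [HH [[h [Hh Hhm]] Hs]] Hss.
  apply Hs in Hss. destruct Hss as [c [Hc [Hcc [Hsc | Hsc]]]].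
  - apply Hcc, Hsc, Hs, hclass_in_bpot; auto.
  - assert (Hall : forall y, mem y s).
    { intros y. apply NNPP; intro Hy. apply Hy, (hclass_sub_bpot H s HH Hs c Hc), Hsc, Hy. }
    destruct (proj1 (Hs h) (Hall h)) as [c' [Hc' [Hc'c' [Hhc' | Hhc']]]].
    + apply Hc'c', Hhc', Hhm; auto.
    + apply (hclass_not_cobounded H h c'); auto.
Qed.

Lemma level_of_trichotomy H K s t : level_of H s -> level_of K t ->
  s = t \/ (K s /\ mem s t) \/ (H t /\ mem t s).
Proof.
  intros [HH [_ Hs]] [HK [_ Ht]].
  destruct (hclass_cmp H K HH HK) as [E | [[x [Hx Ex]] | [y [Ky Ey]]]].
  - left. apply blt_ext. intros z. rewrite Hs, Ht. apply in_bpot_ext. intros c _; auto.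
  - assert (t = x) as ->.
    { apply blt_ext; intros z. rewrite Ht, (hclass_mem H HH x Hx z).
      apply in_bpot_ext; intros c _; auto. }
    right; right. split; auto. apply Hs, hclass_in_bpot; auto.
  - assert (s = y) as ->.
    { apply blt_ext; intros z. rewrite Hs, (hclass_mem K HK y Ky z).
      apply in_bpot_ext; intros c _; auto. }
    right; left. split; auto. apply Ht, hclass_in_bpot; auto.
Qed.

Lemma level_of_mem H K s t : level_of H s -> level_of K t -> mem t s -> H t.
Proof.
  intros Hs Ht Hts.
  destruct (level_of_trichotomy H K s t Hs Ht) as [-> | [[Ks Hst] | [Ht' _]]]; auto.
  - exfalso; apply (level_of_nself H t Hs); auto.
  - exfalso. pose proof Ht as [HK [_ Htm]]. apply (level_of_nself K t Ht).
    apply (hclass_sub_bpot K t HK Htm s Ks); auto.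
Qed.

Lemma level_nself s : level s -> ~ mem s s.
Proof. intros Hs. destruct (level_level_of s Hs) as [H HL]. exact (level_of_nself H s HL). Qed.

Lemma level_mem_sub s t : level s -> level t -> mem t s -> sub t s.
Proof.
  intros Hs Ht Hts.
  destruct (level_level_of s Hs) as [H HL], (level_level_of t Ht) as [K KL].
  pose proof (level_of_mem H K s t HL KL Hts) as Htt.
  destruct HL as [HH [_ Hsm]]. exact (hclass_sub_bpot H s HH Hsm t Htt).
Qed.

Lemma level_trans s t u : level s -> level t -> level u -> mem s t -> mem t u -> mem s u.
Proof. intros Hs Ht Hu Hst Htu. exact (level_mem_sub u t Hu Ht Htu s Hst). Qed.

Lemma level_total s t : level s -> level t -> mem s t \/ s = t \/ mem t s.
Proof.
  intros Hs Ht.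
  destruct (level_level_of s Hs) as [H HL], (level_level_of t Ht) as [K KL].
  destruct (level_of_trichotomy H K s t HL KL) as [-> | [[_ Hst] | [_ Hts]]]; auto.
Qed.

Lemma level_least (Q : M -> Prop) : (forall x, Q x -> level x) -> (exists x, Q x) ->
  exists m, Q m /\ forall y, Q y -> m = y \/ mem m y.
Proof.
  intros HQ [s0 Qs0].
  destruct (level_level_of s0 (HQ s0 Qs0)) as [H0 HL0].
  destruct (classic (exists t, Q t /\ mem t s0)) as [[t [Qt Hts]] | Hno].
  - destruct (hclass_wf H0 (proj1 HL0) (fun t => Q t /\ mem t s0)) as [m [[Qm Hms] Hmin]].
    + intros x [Qx Hx]. destruct (level_level_of x (HQ x Qx)) as [K KL].
      exact (level_of_mem H0 K s0 x HL0 KL Hx).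
    + eauto.
    + exists m. split; auto. intros y Qy.
      destruct (level_total m y (HQ m Qm) (HQ y Qy)) as [|[|Hym]]; auto.
      exfalso. apply (Hmin y); auto. split; auto. apply (level_trans y m s0); auto.
  - exists s0. split; auto. intros y Qy.
    destruct (level_total s0 y (HQ s0 Qs0) (HQ y Qy)) as [|[|Hys]]; auto.
    exfalso; eauto.
Qed.

Lemma levels_well_ordered : well_ordered_on level mem.
Proof.
  split; [|split; [|split]].
  - exact level_trans.
  - exact level_nself.
  - exact level_total.
  - exact level_least.
Qed.

Lemma level_minimal_counterexample (P : M -> Prop) s : level s -> ~ P s ->
  exists m, level m /\ ~ P m /\ forall t, level t -> mem t m -> P t.
Proof.
  intros Hs Ps.
  destruct (level_least (fun t => level t /\ ~ P t)) as [m [[Hm Pm] Hmin]]; [tauto | eauto |].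
  exists m. split; [|split]; auto. intros t Ht Htm. apply NNPP; intro Pt.
  destruct (Hmin t) as [-> | Hmt]; auto; apply (level_nself t Ht); auto.
  apply (level_trans t m t); auto.
Qed.

Lemma level_below s : level s ->
  hclass (fun t => level t /\ mem t s) /\
  forall y, mem y s <-> bpot (fun t => level t /\ mem t s) y.
Proof.
  intros Hs. destruct (level_level_of s Hs) as [H HL].
  assert (E : forall t, H t <-> level t /\ mem t s).
  { intros t. split.
    - intros Ht. split; [exact (hclass_elem_level H t (proj1 HL) Ht)|].
      apply (proj2 (proj2 HL)), hclass_in_bpot; [apply HL | exact Ht].
    - intros [Ht Hts]. destruct (level_level_of t Ht) as [K KL].
      exact (level_of_mem H K s t HL KL Hts). }
  split.
  - apply (hclass_ext H); [exact E | apply HL].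
  - intros y. rewrite (proj2 (proj2 HL) y). apply in_bpot_ext; intros c _; auto.
Qed.

(* Take the least level [s] containing [x]: [x] lies in [bpot] of the levels
   below [s], and each alternative contradicts either minimality or Russell. *)
Lemma sub_nself c x : ~ mem c c -> sub x c -> ~ mem x x.
Proof.
  intros Hc Hxc Hxx.
  destruct (blt_strat c Hc) as [s0 [Hs0 Hcs0]].
  destruct (level_least (fun s => level s /\ mem x s)) as [s [[Hs Hxs] Hmin]];
    [tauto | exists s0; auto |].
  destruct (level_level_of s Hs) as [H [HH [_ Hsm]]].
  apply Hsm in Hxs. destruct Hxs as [d [Hd [Hdd [Hxd | Hxd]]]].
  - assert (Hdl : level d) by (apply (hclass_elem_level H); auto).
    assert (Hds : mem d s) by (apply Hsm, hclass_in_bpot; auto).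
    destruct (Hmin d) as [-> | Hsd]; auto; apply (level_nself d Hdl); auto.
    apply (level_trans d s d); auto.
  - assert (Hss0 : sub s s0).
    { destruct (Hmin s0) as [-> | Hss0]; [split; auto | intros z; auto |].
      apply level_mem_sub; auto. }
    assert (Hdss : sub d s) by (apply (hclass_sub_bpot H s HH Hsm); auto).
    apply (not_universal s0 (level_nself s0 Hs0)). intros y.
    destruct (classic (mem y x)) as [Hy | Hy]; [apply Hcs0, Hxc | apply Hss0, Hdss, Hxd]; auto.
Qed.

Lemma compl_nself_iff x d : (forall y, mem y d <-> ~ mem y x) -> (~ mem x x <-> mem d d).
Proof.
  intros Hd. destruct (blt_compl x) as [d' [Hd' Hdd']].
  replace d with d'; [exact Hdd'|].
  apply blt_ext; intros y; rewrite Hd, Hd'; tauto.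
Qed.

Lemma csub_self c x : ~ mem c c -> csub x c -> mem x x.
Proof.
  intros Hc Hxc. destruct (blt_compl x) as [d [Hd Hdd]].
  assert (Hdd' : ~ mem d d) by (apply (sub_nself c d Hc); intros y Hy; apply Hxc, Hd, Hy).
  apply NNPP; intro Hx. apply Hdd', Hdd, Hx.
Qed.

Lemma least_level_exists x : ~ mem x x -> exists b, least_level_over M mem x b.
Proof.
  intros Hx. destruct (blt_strat x Hx) as [s [Hs Hxs]].
  destruct (level_least (fun b => level b /\ sub x b)) as [m [[Hm Hxm] Hmin]]; [tauto | eauto |].
  exists m. split; [|split]; auto. intros b' Hb' Hxb'.
  destruct (Hmin b') as [-> | ]; auto.
Qed.

End Levels.

Arguments hclass {M} mem H.

(** * Bisimulation between two models *)

Section BisimulationStep.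
Context {M1 M2 : Type} (mem1 : M1 -> M1 -> Prop) (mem2 : M2 -> M2 -> Prop).

Definition bisim_step (R : M1 -> M2 -> Prop) (x : M1) (y : M2) : Prop :=
  (~ mem1 x x /\ ~ mem2 y y /\
     (forall u, mem1 u x -> exists v, mem2 v y /\ R u v) /\
     (forall v, mem2 v y -> exists u, mem1 u x /\ R u v)) \/
  (mem1 x x /\ mem2 y y /\
     exists x' y', (forall z, mem1 z x' <-> ~ mem1 z x) /\
                   (forall z, mem2 z y' <-> ~ mem2 z y) /\ R x' y').

Definition bisim (x : M1) (y : M2) : Prop :=
  forall R : M1 -> M2 -> Prop, (forall a b, bisim_step R a b -> R a b) -> R x y.

Lemma bisim_step_mono (R S : M1 -> M2 -> Prop) : (forall a b, R a b -> S a b) ->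
  forall x y, bisim_step R x y -> bisim_step S x y.
Proof.
  intros HRS x y [[H1 [H2 [H3 H4]]] | [H1 [H2 [x' [y' [H3 [H4 H5]]]]]]].
  - left. split; [|split; [|split]]; auto.
    + intros u Hu. destruct (H3 u Hu) as [v [Hv Hr]]; eauto.
    + intros v Hv. destruct (H4 v Hv) as [u [Hu Hr]]; eauto.
  - right. split; [|split]; auto. exists x', y'; auto.
Qed.

Lemma bisim_fold x y : bisim_step bisim x y -> bisim x y.
Proof.
  intros Hxy R HR. apply HR. revert Hxy. apply bisim_step_mono. intros a b Hab. apply Hab, HR.
Qed.

Lemma bisim_unfold x y : bisim x y -> bisim_step bisim x y.
Proof.
  intros Hxy. apply (Hxy (bisim_step bisim)). intros a b.
  apply bisim_step_mono. intros u v. apply bisim_fold.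
Qed.

Lemma bisim_ind (P : M1 -> M2 -> Prop) :
  (forall a b, bisim_step (fun u v => bisim u v /\ P u v) a b -> P a b) ->
  forall x y, bisim x y -> P x y.
Proof.
  intros IH x y Hxy.
  enough (bisim x y /\ P x y) by tauto.
  apply (Hxy (fun u v => bisim u v /\ P u v)). intros a b Hab. split.
  - apply bisim_fold. revert Hab. apply bisim_step_mono. tauto.
  - apply IH; auto.
Qed.

Lemma bisim_self_iff x y : bisim x y -> (mem1 x x <-> mem2 y y).
Proof. intros Hxy. apply bisim_unfold in Hxy as [[H1 [H2 _]] | [H1 [H2 _]]]; tauto. Qed.

Lemma bisim_members x y : bisim x y -> ~ mem1 x x ->
  (forall u, mem1 u x -> exists v, mem2 v y /\ bisim u v) /\
  (forall v, mem2 v y -> exists u, mem1 u x /\ bisim u v).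
Proof.
  intros Hxy Hx. apply bisim_unfold in Hxy as [[_ [_ H]] | [Hx' _]]; tauto.
Qed.

Lemma bisim_compl x y : bisim x y -> mem1 x x ->
  exists x' y', (forall z, mem1 z x' <-> ~ mem1 z x) /\
                (forall z, mem2 z y' <-> ~ mem2 z y) /\ bisim x' y'.
Proof. intros Hxy Hx. apply bisim_unfold in Hxy as [[Hx' _] | [_ [_ H]]]; tauto. Qed.

End BisimulationStep.

Lemma bisim_sym {M1 M2 : Type} (mem1 : M1 -> M1 -> Prop) (mem2 : M2 -> M2 -> Prop) x y :
  bisim mem1 mem2 x y -> bisim mem2 mem1 y x.
Proof.
  revert x y. apply bisim_ind.
  intros a b [[H1 [H2 [H3 H4]]] | [H1 [H2 [x' [y' [H3 [H4 [_ H5]]]]]]]] R HR; apply HR.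
  - left. split; [|split; [|split]]; auto.
    + intros v Hv. destruct (H4 v Hv) as [u [Hu [_ Hr]]]. exists u; split; auto. exact (Hr R HR).
    + intros u Hu. destruct (H3 u Hu) as [v [Hv [_ Hr]]]. exists v; split; auto. exact (Hr R HR).
  - right. split; [|split]; auto. exists y', x'. split; [|split]; auto. exact (H5 R HR).
Qed.

Definition bisim_covers_fwd {M1 M2 : Type} (mem1 : M1 -> M1 -> Prop) (mem2 : M2 -> M2 -> Prop)
  (A1 : M1 -> Prop) (A2 : M2 -> Prop) : Prop :=
  forall c1, A1 c1 -> ~ mem1 c1 c1 -> exists c2, A2 c2 /\ bisim mem1 mem2 c1 c2.

Definition bisim_covers_bwd {M1 M2 : Type} (mem1 : M1 -> M1 -> Prop) (mem2 : M2 -> M2 -> Prop)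
  (A1 : M1 -> Prop) (A2 : M2 -> Prop) : Prop :=
  forall c2, A2 c2 -> ~ mem2 c2 c2 -> exists c1, A1 c1 /\ bisim mem1 mem2 c1 c2.

Lemma bisim_covers_fwd_sym {M1 M2 : Type} (mem1 : M1 -> M1 -> Prop) (mem2 : M2 -> M2 -> Prop)
  A1 A2 :
  bisim_covers_fwd mem1 mem2 A1 A2 -> bisim_covers_bwd mem2 mem1 A2 A1.
Proof.
  intros Hcov c1 HA1 Hc1. destruct (Hcov c1 HA1 Hc1) as [c2 [HA2 Hc12]].
  exists c2. split; [exact HA2 | apply bisim_sym, Hc12].
Qed.

Lemma bisim_covers_bwd_sym {M1 M2 : Type} (mem1 : M1 -> M1 -> Prop) (mem2 : M2 -> M2 -> Prop)
  A1 A2 :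
  bisim_covers_bwd mem1 mem2 A1 A2 -> bisim_covers_fwd mem2 mem1 A2 A1.
Proof.
  intros Hcov c2 HA2 Hc2. destruct (Hcov c2 HA2 Hc2) as [c1 [HA1 Hc12]].
  exists c1. split; [exact HA1 | apply bisim_sym, Hc12].
Qed.

Section BisimulationFunctional.
Context {M1 M2 : Type} {mem1 : M1 -> M1 -> Prop} {mem2 : M2 -> M2 -> Prop}.
Context (HB1 : BLT M1 mem1) (HB2 : BLT M2 mem2).

Notation E := (bisim mem1 mem2).

Lemma bisim_functional x y y' : E x y -> E x y' -> y = y'.
Proof.
  intros Hxy. revert y'. revert x y Hxy.
  apply (bisim_ind mem1 mem2 (fun x y => forall y', E x y' -> y = y')).
  intros a b [[H1 [H2 [H3 H4]]] | [H1 [H2 [x' [y' [H3 [H4 [_ H5]]]]]]]] b' Hb';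
    apply bisim_unfold in Hb'.
  - destruct Hb' as [[_ [H2' [H3' H4']]] | [Hc _]]; [|contradiction].
    apply (blt_ext HB2). intros v. split.
    + intros Hv. destruct (H4 v Hv) as [u [Hu [_ Huv]]].
      destruct (H3' u Hu) as [v' [Hv' Huv']]. rewrite (Huv v' Huv'); auto.
    + intros Hv. destruct (H4' v Hv) as [u [Hu Huv]].
      destruct (H3 u Hu) as [v' [Hv' [_ Huv']]]. rewrite <- (Huv' v Huv); auto.
  - destruct Hb' as [[Hc _] | [_ [H2' [x'' [y'' [H3' [H4' H5']]]]]]]; [contradiction|].
    assert (x'' = x') as -> by (apply (blt_ext HB1); intros z; rewrite H3, H3'; tauto).
    specialize (H5 y'' H5') as ->.
    apply (blt_ext HB2). intros z. specialize (H4 z). specialize (H4' z).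
    split; intros Hz; apply NNPP; tauto.
Qed.

End BisimulationFunctional.

Section PartialIsomorphism.
Context {M1 M2 : Type} {mem1 : M1 -> M1 -> Prop} {mem2 : M2 -> M2 -> Prop}.
Context (HB1 : BLT M1 mem1) (HB2 : BLT M2 mem2).

Notation E := (bisim mem1 mem2).

Lemma bisim_injective x x' y : E x y -> E x' y -> x = x'.
Proof.
  intros Hxy Hx'y. apply (bisim_functional HB2 HB1 y); apply bisim_sym; auto.
Qed.

Lemma bisim_mem_nself x y u v : E x y -> ~ mem1 x x -> E u v -> (mem1 u x <-> mem2 v y).
Proof.
  intros Hxy Hx Huv. destruct (bisim_members mem1 mem2 x y Hxy Hx) as [Hfwd Hbwd]. split.
  - intros Hu. destruct (Hfwd u Hu) as [v' [Hv' Huv']].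
    rewrite (bisim_functional HB1 HB2 u v v'); auto.
  - intros Hv. destruct (Hbwd v Hv) as [u' [Hu' Huv']].
    rewrite (bisim_injective u u' v); auto.
Qed.

Lemma bisim_mem x y u v : E x y -> E u v -> (mem1 u x <-> mem2 v y).
Proof.
  intros Hxy Huv. destruct (classic (mem1 x x)) as [Hx | Hx]; [|apply bisim_mem_nself; auto].
  destruct (bisim_compl mem1 mem2 x y Hxy Hx) as [x' [y' [Hx' [Hy' Hx'y']]]].
  assert (Hx'x' : ~ mem1 x' x') by (rewrite <- (compl_nself_iff HB1 x x' Hx'); auto).
  pose proof (bisim_mem_nself x' y' u v Hx'y' Hx'x' Huv) as Hm.
  specialize (Hx' u). specialize (Hy' v).
  split; intros Hm'; apply NNPP; tauto.
Qed.

Lemma bisim_sub_range c1 c2 y : E c1 c2 -> ~ mem1 c1 c1 -> subsetM M2 mem2 y c2 ->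
  exists x, E x y /\ subsetM M1 mem1 x c1.
Proof.
  intros Hc Hc1 Hy.
  destruct (blt_sep HB1 (fun u => exists v, mem2 v y /\ E u v) c1 Hc1) as [x [Hx Hxm]].
  exists x. split.
  - apply bisim_fold. left. split; [exact Hx|]. split; [|split].
    + apply (sub_nself HB2 c2 y); auto. rewrite <- (bisim_self_iff mem1 mem2 c1 c2 Hc); auto.
    + intros u Hu. apply Hxm in Hu as [[v [Hv Huv]] _]. eauto.
    + intros v Hv. destruct (bisim_members mem1 mem2 c1 c2 Hc Hc1) as [_ Hbwd].
      destruct (Hbwd v (Hy v Hv)) as [u [Hu Huv]]. exists u. split; auto.
      apply Hxm. split; eauto.
  - intros u Hu. apply Hxm in Hu. tauto.
Qed.

Lemma bisim_csub_range c1 c2 y : E c1 c2 -> ~ mem1 c1 c1 -> csubsetM M2 mem2 y c2 ->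
  exists x, E x y /\ csubsetM M1 mem1 x c1.
Proof.
  intros Hc Hc1 Hy.
  destruct (blt_compl HB2 y) as [y' [Hy' Hyy']].
  destruct (bisim_sub_range c1 c2 y' Hc Hc1) as [x' [Hx'y' Hx'c]].
  { intros z Hz. apply Hy, Hy', Hz. }
  destruct (blt_compl HB1 x') as [x [Hx Hxx]].
  exists x. split.
  - apply bisim_fold. right. split; [|split].
    + apply Hxx, (sub_nself HB1 c1 x'); auto.
    + apply (csub_self HB2 c2 y); auto. rewrite <- (bisim_self_iff mem1 mem2 c1 c2 Hc); auto.
    + exists x', y'. split; [|split; auto].
      intros z; rewrite Hx; split; [intros H H'; contradiction | apply NNPP].
  - intros z Hz. apply Hx'c. apply NNPP; intro Hn. apply Hz, Hx, Hn.
Qed.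

Lemma in_bpot_transfer A1 A2 x y : bisim_covers_fwd mem1 mem2 A1 A2 -> E x y ->
  in_bpot M1 mem1 A1 x -> in_bpot M2 mem2 A2 y.
Proof.
  intros Hcov Hxy [c1 [HA1 [Hc1 Hs]]].
  destruct (Hcov c1 HA1 Hc1) as [c2 [HA2 Hc12]].
  exists c2. split; [exact HA2|]. split; [rewrite <- (bisim_self_iff mem1 mem2 c1 c2 Hc12); auto|].
  destruct Hs as [Hs | Hs].
  - left. assert (Hx : ~ mem1 x x) by (apply (sub_nself HB1 c1 x); auto).
    intros v Hv. destruct (bisim_members mem1 mem2 x y Hxy Hx) as [_ Hbwd].
    destruct (Hbwd v Hv) as [u [Hu Huv]]. apply (bisim_mem c1 c2 u v); auto.
  - right. assert (Hx : mem1 x x) by (apply (csub_self HB1 c1 x); auto).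
    destruct (bisim_compl mem1 mem2 x y Hxy Hx) as [x' [y' [Hx' [Hy' Hx'y']]]].
    assert (Hx'x' : ~ mem1 x' x') by (rewrite <- (compl_nself_iff HB1 x x' Hx'); auto).
    intros v Hv. apply Hy' in Hv.
    destruct (bisim_members mem1 mem2 x' y' Hx'y' Hx'x') as [_ Hbwd].
    destruct (Hbwd v Hv) as [u [Hu Huv]]. apply (bisim_mem c1 c2 u v); auto.
    apply Hs, Hx', Hu.
Qed.

Lemma in_bpot_bisim_range A1 A2 v : bisim_covers_bwd mem1 mem2 A1 A2 ->
  in_bpot M2 mem2 A2 v -> exists u, E u v.
Proof.
  intros Hcov [c2 [HA2 [Hc2 Hs]]].
  destruct (Hcov c2 HA2 Hc2) as [c1 [HA1 Hc12]].
  assert (Hc1 : ~ mem1 c1 c1) by (rewrite (bisim_self_iff mem1 mem2 c1 c2 Hc12); auto).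
  destruct Hs as [Hs | Hs].
  - destruct (bisim_sub_range c1 c2 v Hc12 Hc1 Hs) as [u [Hu _]]; eauto.
  - destruct (bisim_csub_range c1 c2 v Hc12 Hc1 Hs) as [u [Hu _]]; eauto.
Qed.

End PartialIsomorphism.

Section BisimulationBpot.
Context {M1 M2 : Type} {mem1 : M1 -> M1 -> Prop} {mem2 : M2 -> M2 -> Prop}.
Context (HB1 : BLT M1 mem1) (HB2 : BLT M2 mem2).

Notation E := (bisim mem1 mem2).

Lemma bisim_sub_dom c1 c2 x : E c1 c2 -> ~ mem1 c1 c1 -> subsetM M1 mem1 x c1 ->
  exists y, E x y /\ subsetM M2 mem2 y c2.
Proof.
  intros Hc Hc1 Hx.
  destruct (bisim_sub_range HB2 HB1 c2 c1 x) as [y [Hy Hyc]]; [apply bisim_sym; auto | | auto |].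
  - rewrite <- (bisim_self_iff mem1 mem2 c1 c2 Hc); auto.
  - exists y; split; auto. apply bisim_sym; auto.
Qed.

Lemma bisim_csub_dom c1 c2 x : E c1 c2 -> ~ mem1 c1 c1 -> csubsetM M1 mem1 x c1 ->
  exists y, E x y /\ csubsetM M2 mem2 y c2.
Proof.
  intros Hc Hc1 Hx.
  destruct (bisim_csub_range HB2 HB1 c2 c1 x) as [y [Hy Hyc]]; [apply bisim_sym; auto | | auto |].
  - rewrite <- (bisim_self_iff mem1 mem2 c1 c2 Hc); auto.
  - exists y; split; auto. apply bisim_sym; auto.
Qed.

Lemma in_bpot_transfer_bwd A1 A2 x y : bisim_covers_bwd mem1 mem2 A1 A2 -> E x y ->
  in_bpot M2 mem2 A2 y -> in_bpot M1 mem1 A1 x.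
Proof.
  intros Hcov Hxy.
  apply (in_bpot_transfer HB2 HB1); [apply bisim_covers_bwd_sym | apply bisim_sym]; auto.
Qed.

Lemma in_bpot_bisim_dom A1 A2 u : bisim_covers_fwd mem1 mem2 A1 A2 ->
  in_bpot M1 mem1 A1 u -> exists v, E u v.
Proof.
  intros Hcov Hu.
  destruct (in_bpot_bisim_range HB2 HB1 A2 A1 u) as [v Hv];
    [apply bisim_covers_fwd_sym; auto | auto | exists v; apply bisim_sym; auto].
Qed.

Lemma bisim_bpot A1 A2 x y : bisim_covers_fwd mem1 mem2 A1 A2 -> bisim_covers_bwd mem1 mem2 A1 A2 ->
  E x y -> ~ mem1 x x -> (forall u, mem1 u x <-> in_bpot M1 mem1 A1 u) ->
  forall v, mem2 v y <-> in_bpot M2 mem2 A2 v.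
Proof.
  intros Hfwd Hbwd Hxy Hx Hxm v. split.
  - intros Hv. destruct (bisim_members mem1 mem2 x y Hxy Hx) as [_ Hmem].
    destruct (Hmem v Hv) as [u [Hu Huv]].
    apply (in_bpot_transfer HB1 HB2 A1 A2 u v); auto. apply Hxm; auto.
  - intros Hv. destruct (in_bpot_bisim_range HB1 HB2 A1 A2 v Hbwd Hv) as [u Huv].
    apply (bisim_mem HB1 HB2 x y u v); auto.
    apply Hxm, (in_bpot_transfer_bwd A1 A2 u v); auto.
Qed.

Lemma bisim_of_bpot A1 A2 s1 s2 :
  bisim_covers_fwd mem1 mem2 A1 A2 -> bisim_covers_bwd mem1 mem2 A1 A2 ->
  ~ mem1 s1 s1 -> ~ mem2 s2 s2 ->
  (forall u, mem1 u s1 <-> in_bpot M1 mem1 A1 u) ->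
  (forall v, mem2 v s2 <-> in_bpot M2 mem2 A2 v) -> E s1 s2.
Proof.
  intros Hfwd Hbwd Hs1 Hs2 H1 H2. apply bisim_fold. left. split; [|split; [|split]]; auto.
  - intros u Hu. apply H1 in Hu. destruct (in_bpot_bisim_dom A1 A2 u Hfwd Hu) as [v Hv].
    exists v. split; auto. apply H2, (in_bpot_transfer HB1 HB2 A1 A2 u v); auto.
  - intros v Hv. apply H2 in Hv.
    destruct (in_bpot_bisim_range HB1 HB2 A1 A2 v Hbwd Hv) as [u Hu].
    exists u. split; auto. apply H1, (in_bpot_transfer_bwd A1 A2 u v); auto.
Qed.

Lemma bisim_hclass H1 : hclass mem1 H1 -> hclass mem2 (fun v => exists c, H1 c /\ E c v).
Proof.
  intros HH1. split.
  - intros v [c [Hc Hcv]]. rewrite <- (bisim_self_iff mem1 mem2 c v Hcv).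
    apply (hclass_nself H1 HH1 c Hc).
  - intros v [c [Hc Hcv]].
    assert (Hcc : ~ mem1 c c) by apply (hclass_nself H1 HH1 c Hc).
    apply (bisim_bpot (fun d => mem1 d c /\ H1 d) _ c v); auto.
    + intros d [Hdc Hd] _. destruct (bisim_members mem1 mem2 c v Hcv Hcc) as [Hmem _].
      destruct (Hmem d Hdc) as [d2 [Hd2 Hdd2]]. exists d2. split; [split|]; eauto.
    + intros d2 [Hd2v [d [Hd Hdd2]]] _. exists d. split; [split|]; auto.
      apply (bisim_mem HB1 HB2 c v d d2); auto.
    + apply (hclass_mem H1 HH1 c Hc).
Qed.

(* The levels below [s1] form a history class whose bisimilar image generates [s2]. *)
Lemma bisim_level s1 s2 : E s1 s2 -> is_blevel M1 mem1 s1 -> is_blevel M2 mem2 s2.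
Proof.
  intros Hs Hl.
  destruct (level_below HB1 s1 Hl) as [HH1 Hs1m].
  set (H1 := fun c => is_blevel M1 mem1 c /\ mem1 c s1) in *.
  assert (Hs1 : ~ mem1 s1 s1) by (apply (level_nself HB1); auto).
  apply (level_intro HB2 (fun v => exists c, H1 c /\ E c v)).
  - apply bisim_hclass; auto.
  - rewrite <- (bisim_self_iff mem1 mem2 s1 s2 Hs); auto.
  - apply (bisim_bpot H1 _ s1 s2); auto.
    + intros d Hd _. destruct (bisim_members mem1 mem2 s1 s2 Hs Hs1) as [Hmem _].
      destruct (Hmem d (proj2 Hd)) as [d2 [_ Hdd2]]. eauto.
    + intros d2 [d [Hd Hdd2]] _. eauto.
Qed.

(* Members of a bisimilar level are bisimilar, so [s2] cannot lie in [t2]. *)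
Lemma bisim_level_mem_unmatched t t2 s2 : E t t2 -> is_blevel M1 mem1 t ->
  is_blevel M2 mem2 s2 -> ~ (exists s1, E s1 s2) -> mem2 t2 s2.
Proof.
  intros Htt2 Ht Hs2 Hun.
  destruct (level_total HB2 t2 s2 (bisim_level t t2 Htt2 Ht) Hs2) as [| [-> | Hs2t2]]; auto.
  - exfalso; eauto.
  - exfalso. apply Hun.
    destruct (bisim_members mem1 mem2 t t2 Htt2 (level_nself HB1 t Ht)) as [_ Hmem].
    destruct (Hmem s2 Hs2t2) as [u [_ Hu]]; eauto.
Qed.

End BisimulationBpot.

Section Comparison.
Context {M1 M2 : Type} {mem1 : M1 -> M1 -> Prop} {mem2 : M2 -> M2 -> Prop}.
Context (HB1 : BLT M1 mem1) (HB2 : BLT M2 mem2).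

Notation E := (bisim mem1 mem2).
Notation level1 := (is_blevel M1 mem1).
Notation level2 := (is_blevel M2 mem2).

Lemma bisim_level_inv s1 s2 : E s1 s2 -> level2 s2 -> level1 s1.
Proof. intros Hs Hl. apply (bisim_level HB2 HB1 s2 s1); [apply bisim_sym|]; auto. Qed.

Lemma bisim_total : (forall s1, level1 s1 -> exists s2, E s1 s2) -> forall x, exists y, E x y.
Proof.
  intros Hlev x. destruct (classic (mem1 x x)) as [Hx | Hx].
  - destruct (blt_compl HB1 x) as [x' [Hx' Hxx']].
    assert (Hx'x' : ~ mem1 x' x') by (rewrite <- Hxx'; auto).
    destruct (blt_strat HB1 x' Hx'x') as [s [Hs Hx's]].
    destruct (Hlev s Hs) as [s2 Hss2].
    destruct (bisim_csub_dom HB1 HB2 s s2 x Hss2 (level_nself HB1 s Hs)) as [y [Hy _]]; eauto.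
    intros z Hz. apply Hx's, Hx', Hz.
  - destruct (blt_strat HB1 x Hx) as [s [Hs Hxs]].
    destruct (Hlev s Hs) as [s2 Hss2].
    destruct (bisim_sub_dom HB1 HB2 s s2 x Hss2 (level_nself HB1 s Hs)) as [y [Hy _]]; eauto.
Qed.

(* Otherwise the least unmatched levels on both sides would be bisimilar. *)
Lemma levels_bisim_dichotomy :
  (forall s1, level1 s1 -> exists s2, E s1 s2) \/ (forall s2, level2 s2 -> exists s1, E s1 s2).
Proof.
  apply NNPP; intros Hn. apply not_or_and in Hn as [Hn1 Hn2].
  apply not_all_ex_not in Hn1 as [s1 Hs1]. apply imply_to_and in Hs1 as [Hl1 Hun1].
  apply not_all_ex_not in Hn2 as [s2 Hs2]. apply imply_to_and in Hs2 as [Hl2 Hun2].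
  destruct (level_minimal_counterexample HB1 (fun s => exists s2, E s s2) s1 Hl1 Hun1)
    as [m1 [Hm1 [Jm1 Hbelow1]]].
  destruct (level_minimal_counterexample HB2 (fun s => exists s1, E s1 s) s2 Hl2 Hun2)
    as [m2 [Hm2 [Jm2 Hbelow2]]].
  apply Jm1. exists m2.
  apply (bisim_of_bpot HB1 HB2 (fun t => level1 t /\ mem1 t m1) (fun t => level2 t /\ mem2 t m2));
    [| | apply level_nself | apply level_nself | apply level_below | apply level_below]; auto.
  - intros t [Ht Htm] _. destruct (Hbelow1 t Ht Htm) as [t2 Htt2]. exists t2.
    split; [split|]; auto.
    + apply (bisim_level HB1 HB2 t); auto.
    + apply (bisim_level_mem_unmatched HB1 HB2 t t2 m2); auto.
  - intros t2 [Ht2 Ht2m] _. destruct (Hbelow2 t2 Ht2 Ht2m) as [t Htt2]. exists t.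
    split; [split|]; auto.
    + apply (bisim_level_inv t t2); auto.
    + apply (bisim_level_mem_unmatched HB2 HB1 t2 t m1); [apply bisim_sym | | |]; auto.
      intros [s Hs]. apply Jm1. exists s. apply bisim_sym, Hs.
Qed.

End Comparison.

Section Embedding.
Context {M1 M2 : Type} {mem1 : M1 -> M1 -> Prop} {mem2 : M2 -> M2 -> Prop}.
Context (HB1 : BLT M1 mem1) (HB2 : BLT M2 mem2).

Notation E := (bisim mem1 mem2).
Notation level1 := (is_blevel M1 mem1).
Notation level2 := (is_blevel M2 mem2).

Lemma iso_to_sub_of_bisim (D : M2 -> Prop) : (forall x, exists y, E x y) ->
  (forall y, D y <-> exists x, E x y) -> iso_to_sub mem1 mem2 D.
Proof.
  intros Htot HD.
  destruct (choice E Htot) as [f Hf].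
  exists f. split; [|split; [|split]].
  - intros x. apply HD. eauto.
  - intros a1 a2 Hf12. apply (bisim_injective HB1 HB2 a1 a2 (f a1)); [|rewrite Hf12]; auto.
  - intros y Hy. apply HD in Hy as [x Hx]. exists x.
    apply (bisim_functional HB1 HB2 x); auto.
  - intros a1 a2. apply (bisim_mem HB1 HB2); auto.
Qed.

Section BelowUnmatchedLevel.
Hypothesis Hlev : forall s1, level1 s1 -> exists s2, E s1 s2.
Variable st : M2.
Hypotheses (Hst : level2 st) (Hun : ~ exists s1, E s1 st).
Hypothesis Hbelow : forall t, level2 t -> mem2 t st -> exists s1, E s1 t.

Lemma bisim_least_level_below x y : E x y -> ~ mem1 x x ->
  exists b, least_level_over M2 mem2 y b /\ mem2 b st.
Proof.
  intros Hxy Hx.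
  destruct (least_level_exists HB1 x Hx) as [b1 [Hb1 [Hxb1 _]]].
  destruct (Hlev b1 Hb1) as [b2 Hb12].
  assert (Hb2st : mem2 b2 st) by (apply (bisim_level_mem_unmatched HB1 HB2 b1); auto).
  assert (Hyb2 : subsetM M2 mem2 y b2).
  { intros v Hv. destruct (bisim_members mem1 mem2 x y Hxy Hx) as [_ Hmem].
    destruct (Hmem v Hv) as [u [Hu Huv]]. apply (bisim_mem HB1 HB2 b1 b2 u v); auto. }
  assert (Hy : ~ mem2 y y) by (rewrite <- (bisim_self_iff mem1 mem2 x y Hxy); auto).
  destruct (least_level_exists HB2 y Hy) as [b Hb].
  exists b. split; auto. destruct Hb as [Hbl [_ Hbmin]].
  destruct (Hbmin b2 (bisim_level HB1 HB2 b1 b2 Hb12 Hb1) Hyb2) as [-> | Hbb2]; auto.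
  apply (level_trans HB2 b b2 st); auto. apply (bisim_level HB1 HB2 b1); auto.
Qed.

Lemma bisim_range_below y : (exists b, is_B M2 mem2 y b /\ mem2 b st) <-> exists x, E x y.
Proof.
  split.
  - intros [b [HB Hbst]].
    assert (Hb : level2 b) by (destruct HB as [[_ [Hb _]] | [_ [c [_ [Hb _]]]]]; exact Hb).
    destruct (Hbelow b Hb Hbst) as [a Hab].
    assert (Ha : ~ mem1 a a) by (apply (level_nself HB1), (bisim_level_inv HB1 HB2 a b); auto).
    destruct HB as [[_ [_ [Hyb _]]] | [_ [c [Hc [_ [Hcb _]]]]]].
    + destruct (bisim_sub_range HB1 HB2 a b y Hab Ha Hyb) as [x [Hx _]]; eauto.
    + destruct (bisim_csub_range HB1 HB2 a b y Hab Ha) as [x [Hx _]]; eauto.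
      intros z Hz. apply Hcb, Hc, Hz.
  - intros [x Hxy]. destruct (classic (mem1 x x)) as [Hx | Hx].
    + destruct (bisim_compl mem1 mem2 x y Hxy Hx) as [x' [y' [Hx' [Hy' Hx'y']]]].
      assert (Hx'x' : ~ mem1 x' x') by (rewrite <- (compl_nself_iff HB1 x x' Hx'); auto).
      destruct (bisim_least_level_below x' y' Hx'y' Hx'x') as [b [Hb Hbst]].
      exists b. split; auto. right. split; [apply (bisim_self_iff mem1 mem2 x y Hxy); auto|eauto].
    + destruct (bisim_least_level_below x y Hxy Hx) as [b [Hb Hbst]].
      exists b. split; auto. left. split; auto.
      rewrite <- (bisim_self_iff mem1 mem2 x y Hxy); auto.
Qed.

End BelowUnmatchedLevel.

Lemma bisim_range_total : (forall s2, level2 s2 -> exists s1, E s1 s2) -> forall y, exists x, E x y.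
Proof.
  intros Hlev y. destruct (bisim_total HB2 HB1) with y as [x Hx]; [|exists x; apply bisim_sym, Hx].
  intros s2 Hs2. destruct (Hlev s2 Hs2) as [s1 Hs]. exists s1. apply bisim_sym, Hs.
Qed.

(* If some level of [M2] is unmatched, the least one, [st], bounds the image. *)
Lemma initial_segment_of_bisim_levels :
  (forall s1, level1 s1 -> exists s2, E s1 s2) -> initial_segment mem1 mem2.
Proof.
  intros Hlev.
  pose proof (bisim_total HB1 HB2 Hlev) as Htot.
  destruct (classic (forall s2, level2 s2 -> exists s1, E s1 s2)) as [Hlev2 | Hlev2].
  - left. apply iso_to_sub_of_bisim; auto.
    intros y. split; [intros _; apply bisim_range_total; auto | auto].
  - right. apply not_all_ex_not in Hlev2 as [s2 Hs2]. apply imply_to_and in Hs2 as [Hl2 Hun2].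
    destruct (level_minimal_counterexample HB2 (fun s => exists s1, E s1 s) s2 Hl2 Hun2)
      as [st [Hst [Hun Hbelow]]].
    exists st. split; auto.
    apply iso_to_sub_of_bisim; auto. apply bisim_range_below; auto.
Qed.

End Embedding.

Theorem blt_models_comparable {M1 M2 : Type} (mem1 : M1 -> M1 -> Prop) (mem2 : M2 -> M2 -> Prop) :
  BLT M1 mem1 -> BLT M2 mem2 -> initial_segment mem1 mem2 \/ initial_segment mem2 mem1.
Proof.
  intros HB1 HB2.
  destruct (levels_bisim_dichotomy HB1 HB2) as [Hlev | Hlev];
    [left | right]; apply initial_segment_of_bisim_levels; auto.
  intros s2 Hs2. destruct (Hlev s2 Hs2) as [s1 Hs]. exists s1. apply bisim_sym, Hs.
Qed.

(** * A model with prescribed levels *)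

(* [Node true I f] denotes the set of the [f i], [Node false I f] its complement. *)
Inductive stree : Type := Node : bool -> forall Ix : Type, (Ix -> stree) -> stree.

Definition sign (t : stree) : bool := match t with Node s _ _ => s end.
Definition branch (t : stree) : Type := match t with Node _ Ix _ => Ix end.
Definition child (t : stree) : branch t -> stree := match t with Node _ _ f => f end.
Definition flip (t : stree) : stree := match t with Node s Ix f => Node (negb s) Ix f end.

Fixpoint teq (t u : stree) {struct t} : Prop :=
  match t, u with
  | Node s Ix f, Node s' J g =>
      s = s' /\ (forall i, exists j, teq (f i) (g j)) /\ (forall j, exists i, teq (f i) (g j))
  end.

Lemma teq_refl t : teq t t.
Proof. induction t as [s Ix f IH]. simpl. split; auto. split; intros i; exists i; auto. Qed.

Lemma teq_sym t u : teq t u -> teq u t.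
Proof.
  revert u. induction t as [s Ix f IH]. intros [s' J g] [Hs [H1 H2]]. simpl. split; auto. split.
  - intros j. destruct (H2 j) as [i Hi]. exists i. apply IH; auto.
  - intros i. destruct (H1 i) as [j Hj]. exists j. apply IH; auto.
Qed.

Lemma teq_trans t u v : teq t u -> teq u v -> teq t v.
Proof.
  revert u v. induction t as [s Ix f IH].
  intros [s' J g] [s'' K h] [Hs [H1 H2]] [Hs' [H3 H4]]. simpl.
  split; [congruence|]. split.
  - intros i. destruct (H1 i) as [j Hj]. destruct (H3 j) as [k Hk]. exists k. eauto.
  - intros k. destruct (H4 k) as [j Hj]. destruct (H2 j) as [i Hi]. exists i. eauto.
Qed.

Definition tin (x t : stree) : Prop := exists i : branch t, teq x (child t i).
Definition tmem (x t : stree) : Prop := if sign t then tin x t else ~ tin x t.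
Definition tsub (t u : stree) : Prop := forall y, tin y t -> tin y u.

Lemma tin_teq x x' t t' : teq x x' -> teq t t' -> tin x t -> tin x' t'.
Proof.
  destruct t as [s Ix f], t' as [s' J g]. intros Hx [Hs [H1 H2]] [i Hi]. simpl in *.
  destruct (H1 i) as [j Hj]. exists j.
  apply teq_trans with x; [apply teq_sym; auto|]. apply teq_trans with (f i); auto.
Qed.

Lemma sign_teq t t' : teq t t' -> sign t = sign t'.
Proof. destruct t, t'. intros [Hs _]; auto. Qed.

Lemma tmem_teq x x' t t' : teq x x' -> teq t t' -> tmem x t -> tmem x' t'.
Proof.
  intros Hx Ht. unfold tmem. rewrite <- (sign_teq t t' Ht). destruct (sign t).
  - apply tin_teq; auto.
  - intros Hn Hp. apply Hn, (tin_teq x' x t' t); auto; apply teq_sym; auto.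
Qed.

Lemma tin_flip w t : tin w (flip t) <-> tin w t.
Proof. destruct t; reflexivity. Qed.

Lemma sign_flip t : sign (flip t) = negb (sign t).
Proof. destruct t; reflexivity. Qed.

Lemma tin_Node x s Ix f : tin x (Node s Ix f) <-> exists i, teq x (f i).
Proof. reflexivity. Qed.

Lemma tmem_flip y t : tmem y (flip t) <-> ~ tmem y t.
Proof.
  unfold tmem. rewrite sign_flip. pose proof (tin_flip y t) as Hflip.
  destruct (sign t); simpl; rewrite Hflip; split; auto. intros Hn. apply NNPP; auto.
Qed.

Lemma tsub_refl t : tsub t t.
Proof. intros y; auto. Qed.

Section TreeModel.
Variables (A : Type) (lt : A -> A -> Prop).
Hypothesis Hwo : well_ordered_on (fun _ => True) lt.

Lemma wo_trans x y z : lt x y -> lt y z -> lt x z.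
Proof. apply (proj1 Hwo); auto. Qed.

Lemma wo_irrefl x : ~ lt x x.
Proof. apply (proj1 (proj2 Hwo)); auto. Qed.

Lemma wo_total x y : lt x y \/ x = y \/ lt y x.
Proof. apply (proj1 (proj2 (proj2 Hwo))); auto. Qed.

Lemma wo_least (Q : A -> Prop) :
  (exists x, Q x) -> exists m, Q m /\ forall y, Q y -> m = y \/ lt m y.
Proof. apply (proj2 (proj2 (proj2 Hwo))); auto. Qed.

Lemma wo_wf : well_founded lt.
Proof.
  intros a. apply NNPP; intro Ha.
  destruct (wo_least (fun x => ~ Acc lt x)) as [m [Hm Hmin]]; eauto.
  apply Hm. constructor. intros y Hy. apply NNPP; intro Hny.
  destruct (Hmin y Hny) as [-> | Hmy];
    [apply (wo_irrefl y) | apply (wo_irrefl m), wo_trans with y]; auto.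
Qed.

(* A branch of [tlevel a] picks [b < a], a sign, and a subfamily of the
   children of [tlevel b]: this is [bpot] of the earlier levels. *)
Definition tlevel_step (a : A) (rec : forall b, lt b a -> stree) : stree :=
  Node true {b : A & {H : lt b a & (bool * (branch (rec b H) -> Prop))%type}}
    (fun q => match q with
              | existT _ b (existT _ H (s, X)) =>
                  Node s {i : branch (rec b H) | X i} (fun i => child (rec b H) (proj1_sig i))
              end).

Definition tlevel : A -> stree := Fix wo_wf (fun _ => stree) tlevel_step.

Lemma tlevel_eq a : tlevel a = tlevel_step a (fun b _ => tlevel b).
Proof.
  unfold tlevel. apply (Fix_eq wo_wf (fun _ => stree) tlevel_step). intros x f g Hfg.
  replace g with f; [reflexivity|].
  apply functional_extensionality_dep; intros y. apply functional_extensionality_dep; auto.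
Qed.

Lemma sign_tlevel a : sign (tlevel a) = true.
Proof. rewrite tlevel_eq. reflexivity. Qed.

Lemma tin_tlevel a y : tin y (tlevel a) <-> exists b, lt b a /\ tsub y (tlevel b).
Proof.
  rewrite tlevel_eq. unfold tlevel_step. rewrite tin_Node. split.
  - intros [[b [H [s X]]] Hy]. exists b. split; auto.
    intros w Hw. apply (tin_teq w w y _ (teq_refl w) Hy), tin_Node in Hw.
    destruct Hw as [[i Hi] Hwi]. exists i. auto.
  - intros [b [H Hs]]. destruct y as [s J g].
    exists (existT _ b (existT _ H (s, fun i => exists j, teq (g j) (child (tlevel b) i)))).
    simpl. split; auto. split.
    + intros j. destruct (Hs (g j)) as [i Hi]; [exists j; apply teq_refl|].
      exists (exist _ i (ex_intro _ j Hi)). auto.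
    + intros [i [j Hj]]. exists j. auto.
Qed.

Lemma tlevel_mono a c : lt a c -> tsub (tlevel a) (tlevel c).
Proof.
  intros Hac y Hy. apply tin_tlevel in Hy as [b [Hb Hs]].
  apply tin_tlevel. exists b. split; [apply wo_trans with a|]; auto.
Qed.

Lemma tlevel_sub_not_lt b c : tsub (tlevel c) (tlevel b) -> ~ lt b c.
Proof.
  revert c. induction b as [b IH] using (well_founded_ind wo_wf). intros c Hs Hbc.
  assert (Hbc' : tin (tlevel b) (tlevel c))
    by (apply tin_tlevel; exists b; split; [|apply tsub_refl]; auto).
  apply Hs, tin_tlevel in Hbc' as [b' [Hb' Hs']].
  exact (IH b' Hb' b Hs' Hb').
Qed.

Lemma tlevel_nself c : ~ tin (tlevel c) (tlevel c).
Proof. intros H. apply tin_tlevel in H as [b [Hb Hs]]. exact (tlevel_sub_not_lt b c Hs Hb). Qed.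

Lemma tlevel_upper_bound a c : exists d, tsub (tlevel a) (tlevel d) /\ tsub (tlevel c) (tlevel d).
Proof.
  destruct (wo_total a c) as [H | [-> | H]]; [exists c | exists c | exists a];
    split; try apply tsub_refl; apply tlevel_mono; auto.
Qed.

Definition bounded (t : stree) : Prop := exists a, tsub t (tlevel a).

Lemma bounded_tin t y : bounded t -> tin y t -> bounded y.
Proof. intros [a Ha] Hy. apply Ha, tin_tlevel in Hy as [b [_ Hb]]. exists b; auto. Qed.

Lemma bounded_tlevel a : bounded (tlevel a).
Proof. exists a; apply tsub_refl. Qed.

Lemma bounded_flip t : bounded t -> bounded (flip t).
Proof. intros [a Ha]. exists a. intros w Hw. apply Ha, tin_flip, Hw. Qed.

Lemma tsub_tlevel_nself a t : tsub t (tlevel a) -> ~ tin t t.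
Proof.
  revert t. induction a as [a IH] using (well_founded_ind wo_wf). intros t Ht Htt.
  destruct (proj1 (tin_tlevel a t) (Ht t Htt)) as [b [Hb Hs]].
  exact (IH b Hb t Hs Htt).
Qed.

Lemma tmem_self_iff t : bounded t -> (tmem t t <-> sign t = false).
Proof.
  intros [a Ha]. pose proof (tsub_tlevel_nself a t Ha) as Htt. unfold tmem.
  destruct (sign t); split; auto; [contradiction | discriminate].
Qed.

Lemma sign_of_nself t : bounded t -> ~ tmem t t -> sign t = true.
Proof.
  intros Ht H. destruct (sign t) eqn:E; auto. exfalso. apply H, tmem_self_iff; auto.
Qed.

(* A level above both [z] and [tlevel b] lies outside both. *)
Lemma bounded_not_cobounded z b : bounded z ->
  ~ forall w, bounded w -> ~ tin w z -> tin w (tlevel b).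
Proof.
  intros [a Ha] H.
  destruct (tlevel_upper_bound a b) as [d [Had Hbd]].
  apply (tlevel_nself d), Hbd, H; [apply bounded_tlevel|].
  intros Hp. apply (tlevel_nself d), Had, Ha, Hp.
Qed.

Lemma teq_of_tmem t u : bounded t -> bounded u ->
  (forall y, bounded y -> (tmem y t <-> tmem y u)) -> teq t u.
Proof.
  intros Ht Hu H.
  assert (Hsign : sign t = sign u).
  { destruct Ht as [a Ha], Hu as [b Hb].
    destruct (tlevel_upper_bound a b) as [d [Had Hbd]].
    assert (Hdt : ~ tin (tlevel d) t) by (intros Hp; apply (tlevel_nself d), Had, Ha, Hp).
    assert (Hdu : ~ tin (tlevel d) u) by (intros Hp; apply (tlevel_nself d), Hbd, Hb, Hp).
    specialize (H (tlevel d) (bounded_tlevel d)). unfold tmem in H.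
    destruct (sign t), (sign u); tauto. }
  assert (Hin : forall y, bounded y -> (tin y t <-> tin y u)).
  { intros y Hy. specialize (H y Hy). unfold tmem in H. rewrite <- Hsign in H.
    destruct (sign t); [exact H|]. split; intros Hp; apply NNPP; tauto. }
  destruct t as [s Ix f], u as [s' J g]. simpl. split; [exact Hsign|]. split.
  - intros i. apply Hin; [apply (bounded_tin (Node s Ix f)); auto|]; exists i; apply teq_refl.
  - intros j.
    assert (Hgj : bounded (g j))
      by (apply (bounded_tin (Node s' J g)); [|exists j; apply teq_refl]; auto).
    destruct (proj2 (Hin (g j) Hgj)) as [i Hi]; [exists j; apply teq_refl|].
    exists i. apply teq_sym, Hi.
Qed.

Definition model : Type := {P : stree -> Prop | exists t, bounded t /\ P = teq t}.

Definition to_model (t : stree) (Ht : bounded t) : model :=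
  exist _ (teq t) (ex_intro _ t (conj Ht eq_refl)).

Definition model_mem (X Y : model) : Prop :=
  exists t u, proj1_sig X = teq t /\ proj1_sig Y = teq u /\ tmem t u.

Notation mlevel := (is_blevel model model_mem).

Lemma teq_class_eq t t' : teq t = teq t' <-> teq t t'.
Proof.
  split.
  - intros H. apply teq_sym. rewrite <- H. apply teq_refl.
  - intros H. apply functional_extensionality; intros u. apply propositional_extensionality.
    split; intros Hu; [apply teq_trans with t; [apply teq_sym|] | apply teq_trans with t']; auto.
Qed.

Lemma to_model_eq t u Ht Hu : to_model t Ht = to_model u Hu <-> teq t u.
Proof.
  rewrite <- teq_class_eq. split; intros H.
  - exact (f_equal (@proj1_sig _ _) H).
  - apply eq_sig_hprop; [intros; apply proof_irrelevance | exact H].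
Qed.

Lemma model_rep (X : model) : exists t Ht, X = to_model t Ht.
Proof.
  destruct X as [P HP]. destruct HP as [t [Ht HPt]] eqn:E. subst P.
  exists t, Ht. apply to_model_eq, teq_refl.
Qed.

Lemma model_mem_to_model t u Ht Hu : model_mem (to_model t Ht) (to_model u Hu) <-> tmem t u.
Proof.
  split; [|exists t, u; auto].
  intros [t' [u' [Ht' [Hu' Hm]]]]. simpl in Ht', Hu'.
  apply teq_class_eq in Ht', Hu'. apply (tmem_teq t' t u' u); auto; apply teq_sym; auto.
Qed.

Definition model_level (a : A) : model := to_model (tlevel a) (bounded_tlevel a).

Lemma model_mem_level t Ht a : model_mem (to_model t Ht) (model_level a) <-> tin t (tlevel a).
Proof. unfold model_level. rewrite model_mem_to_model. unfold tmem. rewrite sign_tlevel. tauto. Qed.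

Lemma model_ext : forall X Y : model, (forall Z, model_mem Z X <-> model_mem Z Y) -> X = Y.
Proof.
  intros X Y H. destruct (model_rep X) as [t [Ht ->]], (model_rep Y) as [u [Hu ->]].
  apply to_model_eq, teq_of_tmem; auto. intros y Hy.
  rewrite <- !(model_mem_to_model y _ Hy). apply H.
Qed.

Lemma model_compl : forall X : model,
  exists C, (forall Z, model_mem Z C <-> ~ model_mem Z X) /\ (~ model_mem X X <-> model_mem C C).
Proof.
  intros X. destruct (model_rep X) as [t [Ht ->]].
  exists (to_model (flip t) (bounded_flip t Ht)). split.
  - intros Z. destruct (model_rep Z) as [y [Hy ->]]. rewrite !model_mem_to_model. apply tmem_flip.
  - rewrite !model_mem_to_model, (tmem_self_iff t Ht), (tmem_self_iff (flip t) (bounded_flip t Ht)).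
    rewrite sign_flip.
    destruct (sign t); simpl; intuition discriminate.
Qed.

Lemma model_sep : forall (F : model -> Prop) X, ~ model_mem X X ->
  exists Y, ~ model_mem Y Y /\ forall Z, model_mem Z Y <-> F Z /\ model_mem Z X.
Proof.
  intros F X HX. destruct (model_rep X) as [t [Ht ->]].
  rewrite model_mem_to_model in HX. pose proof (sign_of_nself t Ht HX) as Hsign.
  set (G := fun y => exists Hy : bounded y, F (to_model y Hy)).
  set (b := Node true {i : branch t | G (child t i)} (fun i => child t (proj1_sig i))).
  assert (Hb : bounded b).
  { destruct Ht as [a Ha]. exists a. intros w [[i Hi] Hw]. apply Ha. exists i; auto. }
  exists (to_model b Hb). split.
  - rewrite model_mem_to_model, (tmem_self_iff b Hb). discriminate.
  - intros Z. destruct (model_rep Z) as [y [Hy ->]].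
    rewrite !model_mem_to_model. unfold tmem. rewrite Hsign. simpl. split.
    + intros [[i [Hi HF]] Hyi]. simpl in Hyi. split; [|exists i; auto].
      replace (to_model y Hy) with (to_model (child t i) Hi); [exact HF|].
      apply to_model_eq, teq_sym, Hyi.
    + intros [HF [i Hi]].
      assert (HG : G (child t i)).
      { exists (bounded_tin t (child t i) Ht (ex_intro _ i (teq_refl _))).
        erewrite (proj2 (to_model_eq _ y _ Hy)); [exact HF | apply teq_sym, Hi]. }
      exists (exist _ i HG). exact Hi.
Qed.

Lemma model_level_mem a b : model_mem (model_level b) (model_level a) <-> lt b a.
Proof.
  transitivity (tin (tlevel b) (tlevel a)); [apply model_mem_level|].
  rewrite tin_tlevel. split.
  - intros [c [Hc Hs]]. destruct (wo_total b c) as [H | [-> | H]]; auto.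
    + apply wo_trans with c; auto.
    + exfalso. exact (tlevel_sub_not_lt c b Hs H).
  - intros H. exists b. split; [exact H | apply tsub_refl].
Qed.

Lemma model_level_nself a : ~ model_mem (model_level a) (model_level a).
Proof. rewrite model_level_mem. apply wo_irrefl. Qed.

Lemma model_sub_level z Hz b : subsetM model model_mem (to_model z Hz) (model_level b) <->
  forall w, bounded w -> tmem w z -> tin w (tlevel b).
Proof.
  split.
  - intros H w Hw Hwz. apply (model_mem_level w Hw), H, (model_mem_to_model w z Hw Hz), Hwz.
  - intros H X HX. destruct (model_rep X) as [w [Hw ->]].
    apply model_mem_level, H; [exact Hw | apply (model_mem_to_model w z Hw Hz), HX].
Qed.

Lemma model_csub_level z Hz b : csubsetM model model_mem (to_model z Hz) (model_level b) <->
  forall w, bounded w -> ~ tmem w z -> tin w (tlevel b).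
Proof.
  split.
  - intros H w Hw Hwz. apply (model_mem_level w Hw), H. rewrite model_mem_to_model. exact Hwz.
  - intros H X HX. destruct (model_rep X) as [w [Hw ->]].
    rewrite model_mem_to_model in HX. apply model_mem_level, H; auto.
Qed.

(* Only the alternative matching the sign of [z] can hold, by [bounded_not_cobounded]. *)
Lemma model_sub_or_csub_level z Hz b :
  subsetM model model_mem (to_model z Hz) (model_level b) \/
  csubsetM model model_mem (to_model z Hz) (model_level b) <-> tsub z (tlevel b).
Proof.
  rewrite model_sub_level, model_csub_level. unfold tmem.
  pose proof (bounded_not_cobounded z b Hz) as Hnc.
  destruct (sign z); split.
  - intros [H | H]; [intros w Hw; apply H; [apply (bounded_tin z)|]; auto | contradiction].
  - intros H. left. intros w _ Hw. apply H, Hw.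
  - intros [H | H]; [contradiction | intros w Hw; apply H; [apply (bounded_tin z)|]; auto].
  - intros H. right. intros w _ Hw. apply H, NNPP, Hw.
Qed.

Lemma model_level_bpot a Y :
  model_mem Y (model_level a) <->
  in_bpot model model_mem (fun c => exists b, lt b a /\ c = model_level b) Y.
Proof.
  destruct (model_rep Y) as [z [Hz ->]]. rewrite model_mem_level, tin_tlevel. split.
  - intros [b [Hb Hs]]. exists (model_level b).
    split; [eauto|]. split; [apply model_level_nself | apply (model_sub_or_csub_level z Hz b), Hs].
  - intros [c [[b [Hb ->]] [_ Hs]]]. exists b.
    split; [exact Hb | apply (model_sub_or_csub_level z Hz b), Hs].
Qed.

Definition thistory (a : A) : stree := Node true {b : A | lt b a} (fun b => tlevel (proj1_sig b)).

Lemma bounded_thistory a : bounded (thistory a).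
Proof.
  exists a. intros w [[b Hb] Hw]. simpl in Hw.
  apply (tin_teq (tlevel b) w (tlevel a) (tlevel a)); [apply teq_sym, Hw | apply teq_refl |].
  apply tin_tlevel. exists b. split; [exact Hb | apply tsub_refl].
Qed.

Definition model_history (a : A) : model := to_model (thistory a) (bounded_thistory a).

Lemma model_history_mem a X :
  model_mem X (model_history a) <-> exists b, lt b a /\ X = model_level b.
Proof.
  destruct (model_rep X) as [y [Hy ->]]. unfold model_history, model_level.
  rewrite model_mem_to_model. unfold tmem, thistory. cbn [sign]. rewrite tin_Node. split.
  - intros [[b Hb] H]. exists b. split; [exact Hb | apply (to_model_eq y (tlevel b)), H].
  - intros [b [Hb Hyb]]. exists (exist _ b Hb). exact (proj1 (to_model_eq y (tlevel b) Hy _) Hyb).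
Qed.

Lemma model_level_is_blevel a : mlevel (model_level a).
Proof.
  exists (model_history a). split; [split|].
  - unfold model_history.
    rewrite model_mem_to_model, tmem_self_iff; [discriminate | apply bounded_thistory].
  - intros x Hx y. apply model_history_mem in Hx as [b [Hb ->]].
    rewrite model_level_bpot. apply in_bpot_ext. intros c _. split.
    + intros [b' [Hb' ->]]. split; [apply model_level_mem; auto|].
      apply model_history_mem. exists b'. split; [apply wo_trans with b|]; auto.
    + intros [Hcb Hch]. apply model_history_mem in Hch as [b'' [Hb'' ->]].
      exists b''. split; [apply model_level_mem|]; auto.
  - intros y. rewrite model_level_bpot. apply in_bpot_ext.
    intros c _. rewrite model_history_mem. tauto.
Qed.

Lemma model_strat : forall X, ~ model_mem X X -> exists s, mlevel s /\ subsetM model model_mem X s.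
Proof.
  intros X HX. destruct (model_rep X) as [t [Ht ->]].
  rewrite model_mem_to_model in HX. pose proof (sign_of_nself t Ht HX) as Hsign.
  destruct Ht as [a Ha] eqn:E. exists (model_level a). split; [apply model_level_is_blevel|].
  intros Y HY. destruct (model_rep Y) as [y [Hy ->]].
  rewrite model_mem_to_model in HY. unfold tmem in HY. rewrite Hsign in HY.
  apply model_mem_level, Ha, HY.
Qed.

Lemma model_BLT : BLT model model_mem.
Proof.
  exact (conj model_ext (conj model_compl (conj model_sep model_strat))).
Qed.

Lemma model_level_inj a1 a2 : model_level a1 = model_level a2 -> a1 = a2.
Proof.
  intros H. destruct (wo_total a1 a2) as [H12 | [H12 | H12]]; auto; exfalso.
  - apply (model_level_nself a2). rewrite <- H at 1. apply model_level_mem, H12.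
  - apply (model_level_nself a1). rewrite H at 1. apply model_level_mem, H12.
Qed.

Lemma model_level_outside s : ~ model_mem s s -> exists a, ~ model_mem (model_level a) s.
Proof.
  destruct (model_rep s) as [z [Hz ->]]. rewrite model_mem_to_model. intros Hzz.
  pose proof (sign_of_nself z Hz Hzz) as Hsign. destruct Hz as [a Ha] eqn:E.
  exists a. unfold model_level. rewrite model_mem_to_model. unfold tmem. rewrite Hsign.
  intros Hp. apply (tlevel_nself a), Ha, Hp.
Qed.

(* For the least level [s0] not of the form [model_level a], the levels below
   [s0] are exactly the [model_level b] with [b] below the least [a] outside. *)
Lemma model_level_surj s : mlevel s -> exists a, model_level a = s.
Proof.
  intros Hs. apply NNPP; intro Hn.
  destruct (level_minimal_counterexample model_BLT (fun s => exists a, model_level a = s) s Hs Hn)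
    as [s0 [Hs0 [Hn0 Hbelow]]].
  apply Hn0.
  destruct (model_level_outside s0 (level_nself model_BLT s0 Hs0)) as [a0 Ha0].
  destruct (wo_least (fun b => ~ model_mem (model_level b) s0)) as [a [Ha Hamin]]; [eauto|].
  assert (Hchar : forall b, model_mem (model_level b) s0 <-> lt b a).
  { intros b. split.
    - intros Hb. destruct (wo_total b a) as [H | [-> | H]]; [auto | contradiction |].
      exfalso. apply Ha, (level_trans model_BLT _ (model_level b));
        try apply model_level_is_blevel; auto. apply model_level_mem, H.
    - intros Hb. apply NNPP; intro Hnb.
      destruct (Hamin b Hnb) as [-> | H]; [|apply (wo_irrefl a), wo_trans with b; auto].
      exact (wo_irrefl b Hb). }
  exists a. apply model_ext. intros y.
  rewrite model_level_bpot, (proj2 (level_below model_BLT s0 Hs0) y).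
  apply in_bpot_ext. intros c _. split.
  - intros [b [Hb ->]]. split; [apply model_level_is_blevel | apply Hchar, Hb].
  - intros [Hc Hcs]. destruct (Hbelow c Hc Hcs) as [b <-].
    exists b. split; [apply Hchar, Hcs | reflexivity].
Qed.

End TreeModel.

Theorem blt_realizes_well_order (A : Type) (lt : A -> A -> Prop) :
  well_ordered_on (fun _ => True) lt ->
  exists (M : Type) (mem : M -> M -> Prop), BLT M mem /\
    exists f : A -> M,
      (forall a, is_blevel M mem (f a)) /\
      (forall a1 a2, f a1 = f a2 -> a1 = a2) /\
      (forall s, is_blevel M mem s -> exists a, f a = s) /\
      (forall a1 a2, lt a1 a2 <-> mem (f a1) (f a2)).
Proof.
  intros Hwo. exists (model A lt Hwo), (model_mem A lt Hwo).
  split; [apply model_BLT|]. exists (model_level A lt Hwo).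
  split; [|split; [|split]].
  - apply model_level_is_blevel.
  - apply model_level_inj.
  - apply model_level_surj.
  - intros a1 a2. symmetry. apply model_level_mem.
Qed.

Theorem theorem11 :
  (* (1) boolean-levels are well-ordered by ∈ *)
  (forall (M : Type) (mem : M -> M -> Prop), BLT M mem ->
     well_ordered_on (is_blevel M mem) mem) /\
  (* (2) every ordinal α > 0 (i.e. every nonempty well-order) is realized
         as the order type of the boolean-levels of some model *)
  (forall (A : Type) (lt : A -> A -> Prop),
     well_ordered_on (fun _ => True) lt -> inhabited A ->
     exists (M : Type) (mem : M -> M -> Prop), BLT M mem /\
       exists f : A -> M,
         (forall a, is_blevel M mem (f a)) /\
         (forall a1 a2, f a1 = f a2 -> a1 = a2) /\
         (forall s, is_blevel M mem s -> exists a, f a = s) /\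
         (forall a1 a2, lt a1 a2 <-> mem (f a1) (f a2))) /\
  (* (3) comparability of models *)
  (forall (M1 : Type) (mem1 : M1 -> M1 -> Prop)
          (M2 : Type) (mem2 : M2 -> M2 -> Prop),
     BLT M1 mem1 -> BLT M2 mem2 ->
     initial_segment mem1 mem2 \/ initial_segment mem2 mem1).
Proof.
  split; [|split].
  - intros M mem HB. exact (levels_well_ordered HB).
  - intros A lt Hwo _. exact (blt_realizes_well_order A lt Hwo).
  - intros M1 mem1 M2 mem2. exact (blt_models_comparable mem1 mem2).
Qed.
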